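(* Let $(X_1(t))_{t\ge 0}$ be an arbitrary real-valued stochastic process (no distributional or path assumptions beyond being real-valued), let $u_0\ge 0$, $c_0\ge 0$ and $k>0$. Put $$I_1(t)=-\min\Big(\inf_{0\le s\le t}X_1(s),\,0\Big),\qquad X_0(t)=u_0+c_0t-k\,I_1(t),$$ $$\tau_0=\inf\{t\ge 0: X_0(t)<0\},\qquad X(t)=u_0+c_0t+k\,X_1(t),\qquad \tau=\inf\{t\ge 0: X(t)<0\}.$$ Then $\tau_0=\tau$ pathwise (hence almost surely). In particular, if $X_1(t)=u_1+c_1t-S_1(t)$ for some process $S_1$, then $$\tau_0=\inf\Big\{t\ge 0:\ \tfrac{u_0}{k}+u_1+\big(\tfrac{c_0}{k}+c_1\big)t-S_1(t)<0\Big\},$$ so that for every $t>0$, $\Psi(t,\mathbf u,\mathbf c):=P(\tau_0<t)=\Psi_1\big(t;\,u_0/k+u_1,\,c_0/k+c_1\big)$, where $\Psi_1(t;u,c):=P\big(\inf\{s\ge0: u+cs-S_1(s)<0\}<t\big)$ is the finite-time ruin probability of the subsidiary with initial reserve $u$ and premium rate $c$.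
   Context: Central branch (CB) network with one subsidiary: the subsidiary reserve process $X_1$ is kept nonnegative by minimal (Skorokhod) regulation, the cumulative bail-out amount being the regulator $I_1$; the CB, whose reserve in isolation is the deterministic drift $u_0+c_0t$, pays a proportional cost $k$ per unit of bail-out, so its reserve is $X_0(t)=u_0+c_0t-kI_1(t)$. The ruin time of the network is the ruin time $\tau_0$ of the CB. $X$ is the ''pooled assets'' process. *)

From Stdlib Require Import Reals Lra ClassicalEpsilon.
Open Scope R_scope.

Inductive ERbar : Type :=
| Fin : R -> ERbar
| PInf : ERbar
| MInf : ERbar.

Definition ER_le (x y : ERbar) : Prop :=
  match x, y with
  | MInf, _ => True
  | _, PInf => True
  | Fin a, Fin b => a <= b
  | _, _ => False
  end.

Definition ER_lt (x y : ERbar) : Prop :=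
  match x, y with
  | MInf, MInf => False
  | MInf, _ => True
  | Fin _, PInf => True
  | Fin a, Fin b => a < b
  | _, _ => False
  end.

Definition ER_opp (x : ERbar) : ERbar :=
  match x with Fin a => Fin (- a) | PInf => MInf | MInf => PInf end.

Definition ER_min0 (x : ERbar) : ERbar :=
  match x with Fin a => Fin (Rmin a 0) | PInf => Fin 0 | MInf => MInf end.

Definition ER_shift (a : R) (x : ERbar) : ERbar :=
  match x with Fin b => Fin (a + b) | PInf => PInf | MInf => MInf end.

(** k * x, for a real k > 0 (used only with k > 0) *)
Definition ER_scale (k : R) (x : ERbar) : ERbar :=
  match x with Fin b => Fin (k * b) | PInf => PInf | MInf => MInf end.

(** m is the infimum (in [-oo,+oo]) of the set S ⊆ R; inf ∅ = +oo. *)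
Definition is_ER_inf (S : R -> Prop) (m : ERbar) : Prop :=
  (forall x, S x -> ER_le m (Fin x)) /\
  (forall l, (forall x, S x -> ER_le l (Fin x)) -> ER_le l m).

(** The infimum of S in the extended reals (it always exists and is unique). *)
Definition ER_inf (S : R -> Prop) : ERbar :=
  epsilon (inhabits MInf) (is_ER_inf S).

Definition bailout (X1 : R -> R) (t : R) : ERbar :=
  ER_opp (ER_min0 (ER_inf (fun v => exists s, 0 <= s <= t /\ v = X1 s))).

Definition cb_reserve (u0 c0 k : R) (X1 : R -> R) (t : R) : ERbar :=
  ER_shift (u0 + c0 * t) (ER_opp (ER_scale k (bailout X1 t))).

Definition cb_ruin_time (u0 c0 k : R) (X1 : R -> R) : ERbar :=
  ER_inf (fun t => 0 <= t /\ ER_lt (cb_reserve u0 c0 k X1 t) (Fin 0)).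

Definition pooled (u0 c0 k : R) (X1 : R -> R) (t : R) : R :=
  u0 + c0 * t + k * X1 t.

Definition pooled_ruin_time (u0 c0 k : R) (X1 : R -> R) : ERbar :=
  ER_inf (fun t => 0 <= t /\ pooled u0 c0 k X1 t < 0).

Definition sub_ruin_time (u c : R) (S : R -> R) : ERbar :=
  ER_inf (fun s => 0 <= s /\ u + c * s - S s < 0).

(* Since the bail-out I_1(t) dominates -X_1(t), the CB reserve never exceeds
   the pooled assets: X_0(t) <= X(t), so tau_0 <= tau.  Conversely X_0(t) < 0
   means that on [0, t] the subsidiary reserve has dropped below
   -(u_0 + c_0 t)/k at some time s, and since u_0 + c_0 s <= u_0 + c_0 t this
   gives X(s) < 0 with s <= t, so tau <= tau_0.  With X_1 = u_1 + c_1 t - S_1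
   the pooled process is k times the reserve of a subsidiary with initial
   reserve u_0/k + u_1 and premium rate c_0/k + c_1, which has the same sign. *)
From Stdlib Require Import Reals Lra Classical ClassicalEpsilon FunctionalExtensionality.
Open Scope R_scope.

Lemma ER_le_antisym x y : ER_le x y -> ER_le y x -> x = y.
Proof. destruct x, y; simpl; intros; try easy; f_equal; lra. Qed.

Lemma ER_le_trans x y z : ER_le x y -> ER_le y z -> ER_le x z.
Proof. destruct x, y, z; simpl; intros; try easy; lra. Qed.

Lemma ER_lt_not_le x y : ER_lt x y -> ~ ER_le y x.
Proof. destruct x, y; simpl; intros; try easy; lra. Qed.

Lemma is_ER_inf_exists S : exists m, is_ER_inf S m.
Proof.
  destruct (classic (exists x, S x)) as [[x0 Sx0] | S_empty].
  2: { exists PInf; split; [intros x Sx; exfalso; eauto | now intros []]. }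
  destruct (classic (exists b, forall x, S x -> b <= x)) as [[b Hb] | unbounded].
  2: { exists MInf; split; [easy |].
       intros [a | |] Hl; simpl; auto.
       - apply unbounded; exists a; exact Hl.
       - exact (Hl _ Sx0). }
  (* The infimum of S is minus the supremum of its reflection -S. *)
  set (E := fun y => S (- y)).
  assert (E_bound : bound E) by (exists (- b); intros y Ey; specialize (Hb _ Ey); lra).
  assert (E_inhabited : exists y, E y) by (exists (- x0); unfold E; now rewrite Ropp_involutive).
  destruct (completeness E E_bound E_inhabited) as [m [m_ub m_least]].
  exists (Fin (- m)); split.
  - intros x Sx; simpl.
    assert (E (- x)) by (unfold E; now rewrite Ropp_involutive).
    specialize (m_ub _ H); lra.
  - intros [a | |] Hl; simpl; auto.
    + enough (m <= - a) by lra.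
      apply m_least; intros y Ey; specialize (Hl _ Ey); simpl in Hl; lra.
    + exact (Hl _ Sx0).
Qed.

Lemma ER_inf_spec S : is_ER_inf S (ER_inf S).
Proof. unfold ER_inf; apply epsilon_spec, is_ER_inf_exists. Qed.

Lemma is_ER_inf_unique S m m' : is_ER_inf S m -> is_ER_inf S m' -> m = m'.
Proof. intros [lb least] [lb' least']; apply ER_le_antisym; auto. Qed.

Lemma ER_inf_lb S x : S x -> ER_le (ER_inf S) (Fin x).
Proof. apply ER_inf_spec. Qed.

Lemma ER_inf_lt S q : ER_lt (ER_inf S) (Fin q) -> exists x, S x /\ x < q.
Proof.
  intros inf_lt; apply NNPP; intros none.
  apply (ER_lt_not_le _ _ inf_lt), ER_inf_spec.
  intros x Sx; simpl; apply Rnot_lt_le; intros lt_xq; apply none; eauto.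
Qed.

Lemma ER_inf_eq_of_coinitial (S T : R -> Prop) :
  (forall x, S x -> exists y, T y /\ y <= x) ->
  (forall y, T y -> exists x, S x /\ x <= y) ->
  ER_inf S = ER_inf T.
Proof.
  intros ST TS.
  destruct (ER_inf_spec S) as [S_lb S_least].
  apply (is_ER_inf_unique T); [split | apply ER_inf_spec].
  - intros y Ty; destruct (TS y Ty) as [x [Sx le_xy]].
    apply ER_le_trans with (Fin x); auto.
  - intros l l_lb; apply S_least; intros x Sx.
    destruct (ST x Sx) as [y [Ty le_yx]].
    apply ER_le_trans with (Fin y); auto.
Qed.

Lemma ER_inf_ext (S T : R -> Prop) : (forall x, S x <-> T x) -> ER_inf S = ER_inf T.
Proof.
  intros ST; apply ER_inf_eq_of_coinitial; intros x Hx;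
    exists x; split; firstorder; apply Rle_refl.
Qed.

Definition running_inf (X1 : R -> R) (t : R) : ERbar :=
  ER_inf (fun v => exists s, 0 <= s <= t /\ v = X1 s).

Section NetworkRuin.

Variables (u0 c0 k : R) (X1 : R -> R).
Hypotheses (hu0 : 0 <= u0) (hc0 : 0 <= c0) (hk : 0 < k).

Lemma cb_reserve_running_inf t :
  cb_reserve u0 c0 k X1 t = ER_shift (u0 + c0 * t) (ER_scale k (ER_min0 (running_inf X1 t))).
Proof.
  unfold cb_reserve, bailout; fold (running_inf X1 t).
  destruct (running_inf X1 t); simpl; try reflexivity; f_equal; ring.
Qed.

Lemma cb_reserve_le_pooled t : 0 <= t -> ER_le (cb_reserve u0 c0 k X1 t) (Fin (pooled u0 c0 k X1 t)).
Proof.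
  intros ht; rewrite cb_reserve_running_inf; unfold pooled.
  assert (inf_le : ER_le (running_inf X1 t) (Fin (X1 t))).
  { apply ER_inf_lb; exists t; split; [lra | reflexivity]. }
  destruct (running_inf X1 t) as [j | |]; simpl in inf_le |- *; try easy.
  pose proof (Rmin_l j 0); nra.
Qed.

Lemma cb_reserve_neg_pooled_neg_before t :
  0 <= t -> ER_lt (cb_reserve u0 c0 k X1 t) (Fin 0) ->
  exists s, 0 <= s <= t /\ pooled u0 c0 k X1 s < 0.
Proof.
  intros ht; rewrite cb_reserve_running_inf; intros reserve_neg.
  set (q := - (u0 + c0 * t) / k).
  assert (kq : k * q = - (u0 + c0 * t)) by (unfold q; field; lra).
  assert (inf_lt : ER_lt (running_inf X1 t) (Fin q)).
  { destruct (running_inf X1 t) as [j | |]; simpl in reserve_neg |- *; try easy; [| nra].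
    destruct (Rle_dec j 0).
    - rewrite Rmin_left in reserve_neg by lra; nra.
    - rewrite Rmin_right in reserve_neg by lra; nra. }
  destruct (ER_inf_lt _ _ inf_lt) as [v [[s [hs ->]] X1s_lt]].
  exists s; split; [exact hs |]; unfold pooled; nra.
Qed.

Lemma cb_ruin_time_pooled : cb_ruin_time u0 c0 k X1 = pooled_ruin_time u0 c0 k X1.
Proof.
  apply ER_inf_eq_of_coinitial.
  - intros t [ht reserve_neg].
    destruct (cb_reserve_neg_pooled_neg_before t ht reserve_neg) as [s [hs pooled_neg]].
    exists s; repeat split; lra.
  - intros t [ht pooled_neg]; exists t; split; [split | lra]; [exact ht |].
    pose proof (cb_reserve_le_pooled t ht) as le_pooled.
    destruct (cb_reserve u0 c0 k X1 t); simpl in le_pooled |- *; lra.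
Qed.

Lemma pooled_ruin_time_sub u1 c1 S1 :
  (forall t, 0 <= t -> X1 t = u1 + c1 * t - S1 t) ->
  pooled_ruin_time u0 c0 k X1 = sub_ruin_time (u0 / k + u1) (c0 / k + c1) S1.
Proof.
  intros X1_def; apply ER_inf_ext; intros t.
  enough (pooled_rescaled : 0 <= t ->
            pooled u0 c0 k X1 t = k * (u0 / k + u1 + (c0 / k + c1) * t - S1 t)).
  { split; intros [ht neg]; split; auto; rewrite pooled_rescaled in * by exact ht; nra. }
  intros ht; unfold pooled; rewrite X1_def by exact ht; field; lra.
Qed.

End NetworkRuin.

Theorem mainTheorem1 (Omega : Type) (X1 : Omega -> R -> R) (u0 c0 k : R)
  (hu0 : 0 <= u0) (hc0 : 0 <= c0) (hk : 0 < k) :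
  (forall w, cb_ruin_time u0 c0 k (X1 w) = pooled_ruin_time u0 c0 k (X1 w)) /\
  (forall (u1 c1 : R) (S1 : Omega -> R -> R),
     (forall w t, 0 <= t -> X1 w t = u1 + c1 * t - S1 w t) ->
     (forall w, cb_ruin_time u0 c0 k (X1 w)
                = sub_ruin_time (u0 / k + u1) (c0 / k + c1) (S1 w)) /\
     (forall (P : (Omega -> Prop) -> R) (t : R), 0 < t ->
        P (fun w => ER_lt (cb_ruin_time u0 c0 k (X1 w)) (Fin t))
        = P (fun w => ER_lt (sub_ruin_time (u0 / k + u1) (c0 / k + c1) (S1 w)) (Fin t)))).
Proof.
  split; [intros w; exact (cb_ruin_time_pooled u0 c0 k (X1 w) hu0 hc0 hk) |].
  intros u1 c1 S1 X1_def.
  assert (cb_sub : forall w, cb_ruin_time u0 c0 k (X1 w)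
                             = sub_ruin_time (u0 / k + u1) (c0 / k + c1) (S1 w)).
  { intros w; rewrite cb_ruin_time_pooled by assumption.
    apply pooled_ruin_time_sub; auto. }
  split; [exact cb_sub |].
  intros P t _; f_equal; apply functional_extensionality; intros w.
  now rewrite cb_sub.
Qed.
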